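(* Let $G$ and $H$ be graphs with $|V(G)|=4$ and $|V(H)|=3$. Then the join $G+H$ is not of class $\mathcal C_0$.
   Context: All graphs are finite, simple and undirected. The join $G+H$ is obtained from vertex-disjoint copies of $G$ and $H$ by adding all edges between $V(G)$ and $V(H)$. A drawing is 1-planar if each edge is crossed at most once (adjacent edges never cross, no edge crosses itself); a graph is 1-planar if it has such a drawing. For a 1-planar drawing $D$, $D^\times$ is the plane graph obtained by turning each crossing into a new degree-4 vertex (a false vertex); $N_{D^\times}(c)$ is the neighbour set of a false vertex $c$. A 1-planar graph is of class $\mathcal C_0$ if it has a 1-planar drawing $D$ with $|N_{D^\times}(c_1)\cap N_{D^\times}(c_2)|=0$ for all distinct false vertices $c_1,c_2$. *)

From mathcomp Require Import all_boot.
From mathcomp Require Import fingroup perm.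
Set Implicit Arguments. Unset Strict Implicit. Unset Printing Implicit Defensive.

Definition simple_graph (T : finType) (e : rel T) : Prop :=
  symmetric e /\ irreflexive e.

Definition join (T1 T2 : finType) (g : rel T1) (h : rel T2) : rel (T1 + T2) :=
  fun x y => match x, y with
  | inl a, inl b => g a b
  | inr a, inr b => h a b
  | _, _ => true
  end.

Notation darts P := {p | P p.1 p.2}.

(* (sigma, alpha) is a combinatorial map of the graph P whose faces are the
   orbits of sigma \o alpha, and it has genus 0 (Euler's formula holds
   component-wise: V - E + F = 2c - #isolated vertices).
   By the Heffter-Edmonds-Ringel rotation principle these are exactly the
   plane embeddings of P up to homeomorphism. *)
Definition plane_map (V : finType) (P : rel V) (sigma alpha : {perm darts P}) : Prop :=
  [/\ (forall d : darts P, (val (alpha d)).1 = (val d).2 /\ (val (alpha d)).2 = (val d).1),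
      (forall d : darts P, (val (sigma d)).1 = (val d).1),
      (forall d d' : darts P, (val d).1 = (val d').1 -> fconnect sigma d d')
    & 2 * (#|V| + fcard (sigma \o alpha) predT + #|[pred v : V | [forall w, ~~ P v w]]|)
      = #|{: darts P}| + 4 * n_comp (connect P) predT].

Section OnePlanar.
Variables (T : finType) (e : rel T).

Definition ends4 (q : (T * T) * (T * T)) : seq T := [:: q.1.1; q.1.2; q.2.1; q.2.2].
Definition slot (q : (T * T) * (T * T)) (s : bool) : T * T := if s then q.1 else q.2.
Definition same_edge (p q : T * T) : bool :=
  ((p.1 == q.1) && (p.2 == q.2)) || ((p.1 == q.2) && (p.2 == q.1)).

(* k crossings; each crosses two edges of e with 4 distinct endpoints
   (adjacent edges never cross, no self-crossing), and every edge is crossed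
   at most once. *)
Definition crossings_ok (k : nat) (cr : 'I_k -> (T * T) * (T * T)) : Prop :=
  (forall i, [/\ e (cr i).1.1 (cr i).1.2, e (cr i).2.1 (cr i).2.2 & uniq (ends4 (cr i))]) /\
  (forall i j (s t : bool), same_edge (slot (cr i) s) (slot (cr j) t) -> i = j /\ s = t).

Definition crossed (k : nat) (cr : 'I_k -> (T * T) * (T * T)) (u v : T) : bool :=
  [exists i, same_edge (u, v) (cr i).1 || same_edge (u, v) (cr i).2].

(* The planarization D^x: original vertices plus one false vertex per crossing. *)
Definition planarization (k : nat) (cr : 'I_k -> (T * T) * (T * T)) : rel (T + 'I_k) :=
  fun x y => match x, y with
  | inl u, inl v => e u v && ~~ crossed cr u v
  | inl u, inr i => u \in ends4 (cr i)
  | inr i, inl u => u \in ends4 (cr i)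
  | inr _, inr _ => false
  end.

(* A 1-planar drawing: crossings, plus a plane embedding of the planarization
   in which the two edges genuinely cross at each false vertex (opposite in
   the rotation). *)
Definition one_planar_drawing (k : nat) (cr : 'I_k -> (T * T) * (T * T))
  (sigma alpha : {perm darts (planarization cr)}) : Prop :=
  [/\ crossings_ok cr, plane_map sigma alpha &
      forall (i : 'I_k) (d : darts (planarization cr)),
        (val d).1 = inr i -> (val d).2 = inl (cr i).1.1 ->
        (val (sigma (sigma d))).2 = inl (cr i).1.2].

(* N_{D^x}(c) for the false vertex of crossing i is ends4 (cr i). *)
Definition class_C0 : Prop :=
  exists (k : nat) (cr : 'I_k -> (T * T) * (T * T))
         (sigma alpha : {perm darts (planarization cr)}),
    one_planar_drawing sigma alpha /\
    (forall i j : 'I_k, i != j -> [disjoint ends4 (cr i) & ends4 (cr j)]).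

End OnePlanar.

From mathcomp Require Import all_boot fingroup perm zify.
Set Implicit Arguments. Unset Strict Implicit. Unset Printing Implicit Defensive.

(* A C0 drawing has pairwise disjoint crossings of four distinct vertices
   each, so a drawing of G + H (7 vertices) has at most one crossing.  Colour
   V(G) and V(H) differently.  Every face of the planarization has length at
   least 3, hence by Euler's formula at most 4|V| - 8 darts avoid any set of
   darts meeting all triangular faces: 20 without a crossing, 24 with one.
   The monochromatic darts, together with one dart leaving the false vertex in
   each triangle through it, form such a set.  The darts avoiding it include
   the uncrossed bichromatic pairs of K_{4,3} and the 4 darts into the false
   vertex, and the rotation at the crossing yields one more dart leaving the
   false vertex: at least 24, resp. 25, darts, a contradiction. *)


Local Notation order := fingraph.order.

Section OrbitCount.
Variables (T : finType) (f : T -> T).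
Hypothesis f_inj : injective f.

Lemma order_f x : order f (f x) = order f x.
Proof. by apply/esym/eq_card; exact: same_fconnect1 f_inj x. Qed.

Lemma fcard_mul_order_le n (a : {pred T}) :
  fclosed f a -> {in a, forall x, n <= order f x} -> fcard f a * n <= #|a|.
Proof.
move=> cl_a a_n; have symf := fconnect_sym f_inj.
set b := [predI froots f & a]; rewrite /n_comp_mem -/b -(card_ord n) -cardX.
pose it (p : T * 'I_n) := iter p.2 f p.1.
rewrite -(card_in_image (f := it)); last first.
  move=> [r i] [r' j] /andP[/andP[/eqP /= rr ar] _] /andP[/andP[/eqP /= rr' _] _].
  rewrite /it /= => Eit.
  have Err' : r = r'.
    by rewrite -rr -rr' (rootP symf (fconnect_iter f i r)) Eit -(rootP symf (fconnect_iter f j r')).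
  subst r'; congr (_, _); apply: ord_inj.
  have lt_n k : k < n -> k < order f r by move=> ltk; exact: leq_trans ltk (a_n r ar).
  by rewrite -(findex_iter (lt_n _ (ltn_ord i))) Eit findex_iter ?lt_n.
apply: subset_leq_card; apply/subsetP => _ /imageP[[r i] /andP[/andP[_ ar] _] ->].
by rewrite /it /= -(closed_connect cl_a (fconnect_iter f i r)).
Qed.

End OrbitCount.

Section PlaneMapFaces.
Variables (V : finType) (P : rel V) (sigma alpha : {perm darts P}).
Hypotheses (pm : plane_map sigma alpha) (P_sym : symmetric P) (P_irr : irreflexive P).
Hypothesis P_no_leaf : forall x y, P x y -> exists2 z, P x z & z != y.

Local Notation phi := (sigma \o alpha).

Lemma phi_inj : injective phi.
Proof. by apply: inj_comp; apply: perm_inj. Qed.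

Lemma alpha_val d : val (alpha d) = ((val d).2, (val d).1).
Proof. by case: pm => alpha_rev _ _ _; case: (alpha_rev d) => <- <-; case: (val _). Qed.

Lemma src_phi d : (val (phi d)).1 = (val d).2.
Proof. by case: pm => _ sigma_src _ _; rewrite /= sigma_src alpha_val. Qed.

(* A face of length 1 would be a loop; a face of length 2 would make [alpha d]
   a fixed point of sigma, i.e. its source would have degree 1. *)
Lemma order_phi_ge3 d : 3 <= order phi d.
Proof.
case: pm => _ sigma_src sigma_trans _.
case: (leqP 3 (order phi d)) => // lt3.
have [o1 | o2] : order phi d = 1 \/ order phi d = 2.
- by have := fingraph.order_gt0 phi d; lia.
- have := iter_order phi_inj d; rewrite o1 /= => E.
  have := src_phi d; rewrite /= E => loop_d.
  by have := valP d; rewrite /= loop_d P_irr.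
have := iter_order phi_inj d; rewrite o2 /= => E2.
pose a := alpha d.
have Ea : val (phi d) = val a.
  rewrite [LHS]surjective_pairing alpha_val src_phi.
  by have := src_phi (phi d); rewrite /= E2 => ->.
have sigma_a : sigma a = a by apply: val_inj; rewrite -Ea.
have [z Pz /negP[]] := P_no_leaf (valP a).
pose d' : darts P := exist _ ((val a).1, z) Pz.
have /iter_findex := sigma_trans a d' erefl; rewrite iter_fix // => ->.
by case: (val a).
Qed.

Definition isolated_vertices := [pred v : V | [forall w, ~~ P v w]].

(* Faces have length at least 3, so 4 F <= D + F_3 with F_3 <= #|S|; combine
   with Euler's formula 2 (V + F + isolated) = D + 4 (components). *)
Lemma plane_map_unmarked_darts (S : {pred darts P}) : 0 < #|V| ->
  (forall d, order phi d = 3 -> exists j, iter j phi d \in S) ->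
  #|[predC S]| + 8 <= 4 * (#|V| + #|isolated_vertices|).
Proof.
case/card_gt0P=> v0 _ S_tri; have symf := fconnect_sym phi_inj.
case: (pm) => _ _ _; rewrite -/isolated_vertices => euler.
have comp_gt0 : 0 < n_comp (connect P) predT.
  apply/card_gt0P; exists (root (connect P) v0); rewrite !inE andbT.
  by apply/roots_root/sym_connect_sym/sym_connect_sym.
pose A3 : {pred darts P} := [pred x | order phi x == 3].
have clA3 : fclosed phi A3 by move=> x _ /eqP <-; rewrite !inE (order_f phi_inj).
have clA3' : fclosed phi [predC A3].
  by move=> x _ /eqP <-; rewrite !inE (order_f phi_inj).
have split_faces : fcard phi predT = fcard phi A3 + fcard phi [predC A3].
  by rewrite -n_compC; apply: eq_n_comp_r.
have tri_faces : fcard phi A3 * 3 = #|A3|.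
  by apply: (fcard_order_set phi_inj _ clA3); apply/subsetP => x.
have big_faces : fcard phi [predC A3] * 4 <= #|[predC A3]|.
  apply: fcard_mul_order_le phi_inj 4 _ clA3' _ => x; rewrite !inE => /eqP.
  by have := order_phi_ge3 x; lia.
have tri_le_S : fcard phi A3 <= #|S|.
  rewrite /n_comp_mem; apply: leq_trans (leq_imset_card (froot phi) S).
  apply/subset_leq_card/subsetP => r; rewrite !inE => /andP[/eqP root_r /eqP o3].
  have [j Sj] := S_tri r o3; apply/imsetP; exists (iter j phi r) => //.
  by rewrite -(rootP symf (fconnect_iter phi j r)).
have darts_A3 : #|{: darts P}| = #|A3| + #|[predC A3]| by rewrite cardC.
have darts_S : #|{: darts P}| = #|S| + #|[predC S]| by rewrite cardC.
lia.
Qed.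

End PlaneMapFaces.

Section Planarization.
Variables (T : finType) (e : rel T).

Lemma same_edge_sym (u v : T) q : same_edge (u, v) q = same_edge (v, u) q.
Proof. by rewrite /same_edge /= orbC andbC [X in _ || X]andbC. Qed.

Lemma crossed_sym k (cr : 'I_k -> (T * T) * (T * T)) u v :
  crossed cr u v = crossed cr v u.
Proof. by apply: eq_existsb => i; rewrite !(same_edge_sym u v). Qed.

Lemma planarization_sym k (cr : 'I_k -> (T * T) * (T * T)) :
  symmetric e -> symmetric (planarization e cr).
Proof. by move=> e_sym [u|i] [v|j] //=; rewrite e_sym crossed_sym. Qed.

Lemma planarization_irr k (cr : 'I_k -> (T * T) * (T * T)) :
  irreflexive e -> irreflexive (planarization e cr).
Proof. by move=> e_irr [u|i] //=; rewrite e_irr. Qed.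

Lemma crossing_partner_uniq q (u v1 v2 : T) : uniq (ends4 q) ->
  same_edge (u, v1) q.1 || same_edge (u, v1) q.2 ->
  same_edge (u, v2) q.1 || same_edge (u, v2) q.2 -> v1 = v2.
Proof.
case: q => [[a b] [c d]]; rewrite /ends4 /same_edge /= !inE !negb_or.
case/and4P=> /and3P[ab ac ad] /andP[bc bd] cd _.
case/orP=> /orP[] /andP[/eqP-> /eqP->]; case/orP=> /orP[] /andP[/eqP E /eqP->] //;
  by move: ab ac ad bc bd cd; rewrite E ?eqxx.
Qed.

Lemma alternating_walk_in_crossing (c : T -> bool) (a1 b1 a2 b2 v w : T) :
  c a1 != c b1 -> v \in [:: a1; b1; a2; b2] -> w \in [:: a1; b1; a2; b2] ->
  c a1 != c v -> c v != c w -> ~~ same_edge (a1, v) (a1, b1) ->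
  ~~ same_edge (v, w) (a1, b1) -> ~~ same_edge (v, w) (a2, b2) -> w = a1.
Proof.
move=> c11; rewrite !inE.
case/or4P=> /eqP->; case/or4P=> /eqP-> //; rewrite /same_edge /= ?eqxx /= ?orbT //;
  by move: c11; case: (c a1); case: (c b1); case: (c a2); case: (c b2).
Qed.

Lemma C0_crossings_le1 k (cr : 'I_k -> (T * T) * (T * T)) :
  crossings_ok e cr -> #|T| < 8 ->
  (forall i j : 'I_k, i != j -> [disjoint ends4 (cr i) & ends4 (cr j)]) -> k <= 1.
Proof.
move=> [cr_ok _] small disj; rewrite leqNgt; apply/negP => k_gt1.
pose i0 : 'I_k := Ordinal (ltn_trans (ltnSn 0) k_gt1); pose i1 : 'I_k := Ordinal k_gt1.
have uniq_ends i : uniq (ends4 (cr i)) by case: (cr_ok i).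
have U : uniq (ends4 (cr i0) ++ ends4 (cr i1)).
  by rewrite cat_uniq !uniq_ends andbT -disjoint_has disjoint_sym disj.
have := max_card (mem (ends4 (cr i0) ++ ends4 (cr i1))).
by rewrite (card_uniqP U) /ends4 /= ltnNge -ltnS small.
Qed.

End Planarization.

Lemma card_pairs_le_darts (V : finType) (P : rel V) (Q : pred (V * V)) :
  #|[pred p : V * V | P p.1 p.2 && Q p]| <= #|[pred d : darts P | Q (val d)]|.
Proof.
rewrite -(card_image val_inj); apply/subset_leq_card/subsetP => p.
rewrite !inE => /andP[Pp Qp]; apply/imageP.
by exists (exist (fun p => P p.1 p.2) p Pp).
Qed.

Definition side (T1 T2 : Type) (t : T1 + T2) : bool := if t is inl _ then true else false.

Definition is_false_vertex (T : Type) k (x : T + 'I_k) : bool :=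
  if x is inr _ then true else false.

Section JoinK43.
Variables (T1 T2 : finType) (g : rel T1) (h : rel T2).
Hypotheses (g_simple : simple_graph g) (h_simple : simple_graph h).
Hypotheses (card_T1 : #|T1| = 4) (card_T2 : #|T2| = 3).
Local Notation T := (T1 + T2)%type.
Local Notation e := (join g h).

Lemma join_sym : symmetric e.
Proof. by case: g_simple h_simple => g_sym _ [h_sym _] [a|a] [b|b] //=. Qed.

Lemma join_irr : irreflexive e.
Proof. by case: g_simple h_simple => _ g_irr [_ h_irr] [a|a] /=. Qed.

Lemma join_bichromatic u v : side u != side v -> e u v.
Proof. by case: u => a; case: v => b. Qed.

Lemma card_other_side (u : T) : 3 <= #|[pred v : T | side v != side u]|.
Proof.
case: u => a; last first.
  apply: (@leq_trans #|T1|); first by rewrite card_T1.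
  rewrite -(card_image (@inl_inj T1 T2)).
  by apply/subset_leq_card/subsetP => v /imageP[b _ ->].
rewrite -card_T2 -(card_image (@inr_inj T1 T2)).
by apply/subset_leq_card/subsetP => v /imageP[b _ ->].
Qed.

Variables (k : nat) (cr : 'I_k -> (T * T) * (T * T)).
Hypotheses (cr_ok : crossings_ok e cr) (k_le1 : k <= 1).
Local Notation V := (T + 'I_k)%type.
Local Notation P := (planarization e cr).

Lemma uniq_ends i : uniq (ends4 (cr i)).
Proof. by case: cr_ok => ends_ok _; case: (ends_ok i). Qed.

Lemma crossing_eq (i j : 'I_k) : i = j.
Proof. by apply: ord_inj; have := ltn_ord i; have := ltn_ord j; lia. Qed.

Lemma crossedE i u v :
  crossed cr u v = same_edge (u, v) (cr i).1 || same_edge (u, v) (cr i).2.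
Proof.
apply/existsP/idP => [[j] | uv_i]; last by exists i.
by rewrite (crossing_eq j i).
Qed.

Lemma crossed_uniq u v1 v2 : crossed cr u v1 -> crossed cr u v2 -> v1 = v2.
Proof.
case/existsP=> i uv1; rewrite (crossedE i).
exact: crossing_partner_uniq (uniq_ends i) uv1.
Qed.

Lemma card_other_side_uncrossed u :
  2 <= #|[pred v : T | (side v != side u) && ~~ crossed cr u v]|.
Proof.
have := card_other_side u.
have [w uw | uncrossed] := pickP (crossed cr u).
  rewrite (cardD1 w); set O := [predD1 _ & w] => le3.
  apply: (@leq_trans #|O|); first by move: le3; case: (_ \in _) => /=; lia.
  apply/subset_leq_card/subsetP => v.
  rewrite !inE => /andP[vw ->] /=; apply: contra vw => uv.
  by rewrite (crossed_uniq uv uw).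
move=> le3; apply: leq_trans (ltnW le3) _; apply/subset_leq_card/subsetP => v.
by rewrite !inE => ->; rewrite uncrossed.
Qed.

Lemma planarization_two_neighbours x :
  exists z1 z2, [/\ z1 != z2, P x z1 & P x z2].
Proof.
case: x => [u | i].
  have /card_gt1P[v1 [v2 [+ + v12]]] := card_other_side_uncrossed u.
  rewrite !inE => /andP[s1 c1] /andP[s2 c2].
  exists (inl v1), (inl v2); split=> //=.
    by rewrite c1 andbT join_bichromatic // eq_sym.
  by rewrite c2 andbT join_bichromatic // eq_sym.
exists (inl (cr i).1.1), (inl (cr i).1.2); rewrite /= /ends4 !inE !eqxx ?orbT.
split=> //; apply: contraTneq (uniq_ends i) => -[same].
by rewrite /ends4 /= same !inE eqxx.
Qed.

Lemma planarization_no_leaf x y : P x y -> exists2 z, P x z & z != y.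
Proof.
move=> _; have [z1 [z2 [z12 xz1 xz2]]] := planarization_two_neighbours x.
by case: (z1 =P y) => [<- | /eqP]; [exists z2; rewrite // eq_sym | exists z1].
Qed.

Lemma planarization_no_isolated : #|isolated_vertices P| = 0.
Proof.
apply: eq_card0 => v; rewrite !inE; apply/negP => /forallP no_nb.
by have [z1 [_ [_ xz1 _]]] := planarization_two_neighbours v; have := no_nb z1; rewrite xz1.
Qed.

Lemma card_planarization_vertices : #|{: V}| = 7 + k.
Proof. by rewrite !card_sum card_T1 card_T2 card_ord. Qed.

Variables (sigma alpha : {perm darts P}).
Hypothesis pm : plane_map sigma alpha.
Local Notation phi := (sigma \o alpha).

Definition monochromatic (d : darts P) : bool :=
  match val d with (inl u, inl v) => side u == side v | _ => false end.

(* A set of darts meeting every triangular face: a triangle on three real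
   vertices has a monochromatic side, and in a triangle through a false vertex
   the dart leaving that vertex is marked unless the next one is. *)
Definition marked (d : darts P) : bool :=
  monochromatic d ||
  [&& is_false_vertex (val d).1, order phi d == 3 & ~~ monochromatic (phi d)].

Lemma monochromaticE d u v : (val d).1 = inl u -> (val d).2 = inl v ->
  monochromatic d = (side u == side v).
Proof. by rewrite /monochromatic; case: (val d) => /= _ _ -> ->. Qed.

Lemma marked_meets_triangles d : order phi d = 3 -> exists j, marked (iter j phi d).
Proof.
move=> o3.
have phi3 : iter 3 phi d = d by rewrite -o3 (iter_order (@phi_inj _ _ sigma alpha)).
have o_iter j : order phi (iter j phi d) = 3.
  by elim: j => //= j IHj; rewrite (order_f (@phi_inj _ _ sigma alpha)).
have next_src j : (val (iter j phi d)).2 = (val (iter j.+1 phi d)).1.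
  exact/esym/(src_phi pm).
have from_false j : is_false_vertex (val (iter j phi d)).1 ->
    exists j, marked (iter j phi d).
  move=> Fj; case M: (monochromatic (phi (iter j phi d))).
    by exists j.+1; change (marked (phi (iter j phi d))); rewrite /marked M.
  by exists j; rewrite /marked Fj o_iter M orbT.
case F0: (is_false_vertex (val d).1); first exact: (from_false 0).
case F1: (is_false_vertex (val (iter 1 phi d)).1); first exact: (from_false 1).
case F2: (is_false_vertex (val (iter 2 phi d)).1); first exact: (from_false 2).
move: F0 F1 F2 (next_src 0) (next_src 1) (next_src 2); rewrite phi3 /=.
case E0: (val d).1 => [u0|] //; case E1: (val (phi d)).1 => [u1|] //.
case E2: (val (phi (phi d))).1 => [u2|] // _ _ _ t0 t1 t2.
have [c01 | c12 | c20] : [\/ side u0 == side u1, side u1 == side u2 | side u2 == side u0].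
- by case: (side u0); case: (side u1); case: (side u2); constructor.
- by exists 0; rewrite /marked (monochromaticE E0 t0) ?c01.
- by exists 1; rewrite /marked (monochromaticE E1 t1) ?c12.
- by exists 2; rewrite /marked (monochromaticE E2 t2) ?c20.
Qed.

(* A marked dart from a false vertex [x] to [a] bounds a triangle [x, a, v],
   whose last side, reversed, is its sigma-predecessor at [x]. *)
Lemma marked_false_dart_pred d i a : (val d).1 = inr i -> (val d).2 = inl a ->
  marked d -> exists v (d' : darts P),
  [/\ v \in ends4 (cr i), side a != side v, ~~ crossed cr a v,
      val d' = (inr i, inl v) & sigma d' = d].
Proof.
move=> src_d tgt_d; rewrite /marked src_d /= => /orP[mono | /andP[/eqP o3 not_mono]].
  by move: mono; rewrite /monochromatic; case: (val d) src_d => ? ? /= ->.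
have phi3 : phi (phi (phi d)) = d by rewrite -[RHS](iter_order (@phi_inj _ _ sigma alpha)) o3.
have src1 := src_phi pm d; have src2 := src_phi pm (phi d).
have src3 := src_phi pm (phi (phi d)); rewrite phi3 src_d in src3.
have := valP (phi (phi d)); rewrite /= -src3.
case E2: (val (phi (phi d))).1 => [v|j] //= v_end.
have := valP (phi d); rewrite /= src1 tgt_d -src2 E2 /= => /andP[_ uncrossed].
exists v, (alpha (phi (phi d))); split=> //.
- have src_pd : (val (phi d)).1 = inl a by rewrite src1.
  have tgt_pd : (val (phi d)).2 = inl v by rewrite -src2 E2.
  by rewrite -(monochromaticE src_pd tgt_pd).
- by rewrite (alpha_val pm) E2 -src3.
Qed.

Hypothesis rotation : forall (i : 'I_k) (d : darts P),
  (val d).1 = inr i -> (val d).2 = inl (cr i).1.1 ->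
  (val (sigma (sigma d))).2 = inl (cr i).1.2.

(* If the dart from [x] to [(cr i).1.1] and its sigma-predecessor were both
   marked, the alternating colours would lead the next predecessor back to
   [(cr i).1.1]: sigma would swap two darts at [x], whereas the rotation puts
   [(cr i).1.2] opposite [(cr i).1.1]. *)
Lemma unmarked_false_dart i : side (cr i).1.1 != side (cr i).1.2 ->
  exists2 d : darts P, is_false_vertex (val d).1 & ~~ marked d.
Proof.
move=> c11.
have P1 : P (inr i) (inl (cr i).1.1) by rewrite /= /ends4 !inE eqxx.
pose d1 : darts P := exist _ (inr i, inl (cr i).1.1) P1.
case M1: (marked d1); last by exists d1; rewrite ?M1.
have [v [d2 [v_end cv uncr_v val_d2 sigma_d2]]] := marked_false_dart_pred (d := d1) erefl erefl M1.
case M2: (marked d2); last by exists d2; rewrite ?val_d2 ?M2.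
have src_d2 : (val d2).1 = inr i by rewrite val_d2.
have tgt_d2 : (val d2).2 = inl v by rewrite val_d2.
have [w [d3 [w_end cw uncr_w val_d3 sigma_d3]]] := marked_false_dart_pred src_d2 tgt_d2 M2.
have w_a1 : w = (cr i).1.1.
  move: v_end w_end cv uncr_v uncr_w; rewrite !(crossedE i) /ends4.
  case: (cr i) c11 => [[a1 b1] [a2 b2]] /= c11 v_end w_end cv.
  move=> /norP[nv1 _] /norP[nw1 nw2].
  exact: alternating_walk_in_crossing c11 v_end w_end cv cw nv1 nw1 nw2.
have d3_d1 : d3 = d1 by apply: val_inj; rewrite val_d3 w_a1.
have := rotation (d := d1) erefl erefl.
rewrite -{1}d3_d1 sigma_d3 sigma_d2 /= => -[same_end].
by have := uniq_ends i; rewrite /ends4 /= same_end !inE eqxx.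
Qed.

Definition unmarked_pair (p : V * V) : bool :=
  match p with
  | (inl u, inl v) => side u != side v
  | (inl _, inr _) => true
  | _ => false
  end.

Definition unmarked_pair_darts : {pred darts P} := [pred d | unmarked_pair (val d)].

Lemma unmarked_pair_unmarked d : unmarked_pair (val d) -> ~~ marked d.
Proof.
rewrite /marked /monochromatic; case: (val d) => -[u|i] [v|j] //=.
by move/negbTE->.
Qed.

Lemma card_unmarked_ge (b : bool) :
  (b -> exists2 d : darts P, is_false_vertex (val d).1 & ~~ marked d) ->
  #|unmarked_pair_darts| + b <= #|[predC marked]|.
Proof.
set U := unmarked_pair_darts.
have sub : U \subset [predC marked].
  by apply/subsetP => d; rewrite !inE => /unmarked_pair_unmarked.
case: b => [/(_ isT)[d0 false_d0 unmarked_d0] | _]; last by rewrite addn0 subset_leq_card.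
have d0_new : d0 \notin U by rewrite inE; case: (val d0) false_d0 => -[].
apply: (@leq_trans #|[predU1 d0 & U]|); first by rewrite cardU1 d0_new addnC.
by apply/subset_leq_card/subsetP => d /predU1P[-> | /(subsetP sub)].
Qed.

Definition bichromatic_pairs : {pred T * T} := [pred p | side p.1 != side p.2].
Definition crossed_pairs : {pred T * T} := [pred p | crossed cr p.1 p.2].

Lemma card_bichromatic_pairs : 24 <= #|bichromatic_pairs|.
Proof.
pose f (x : (T1 * T2) + (T1 * T2)) : T * T :=
  match x with inl (a, b) => (inl a, inr b) | inr (a, b) => (inr b, inl a) end.
have f_inj : injective f by case=> -[a b] [] [a' b'] //= [-> ->].
have card_img : #|image f {: (T1 * T2) + (T1 * T2)}| = 24.
  by rewrite (card_image f_inj) card_sum card_prod card_T1 card_T2.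
rewrite -card_img; by apply/subset_leq_card/subsetP => _ /imageP[[[a b]|[a b]] _ ->].
Qed.

Lemma card_bichromatic_crossed i :
  #|[predI bichromatic_pairs & crossed_pairs]| <=
  2 * (side (cr i).1.1 != side (cr i).1.2) + 2 * (side (cr i).2.1 != side (cr i).2.2).
Proof.
case: (cr i) (crossedE i) => [[a1 b1] [a2 b2]] /= crE.
pose pairs := [:: (a1, b1); (b1, a1); (a2, b2); (b2, a2)].
apply: (@leq_trans (size (filter bichromatic_pairs pairs))).
  apply: leq_trans (card_size _); apply/subset_leq_card/subsetP => -[u v].
  rewrite !inE mem_filter /bichromatic_pairs /= crE => /andP[-> crossed_uv] /=; move: crossed_uv.
  by rewrite /same_edge /= => /orP[] /orP[] /andP[/eqP-> /eqP->]; rewrite !inE !eqxx ?orbT.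
rewrite /bichromatic_pairs /= ![side b1 == _]eq_sym ![side b2 == _]eq_sym.
by case: (side a1 != side b1); case: (side a2 != side b2).
Qed.

Lemma card_false_pairs (i : 'I_k) :
  4 <= #|[pred p : V * V | P p.1 p.2 && is_false_vertex p.2]|.
Proof.
have lift_inj : injective (fun t : T => (inl t : V, inr i : V)) by move=> ? ? [].
have uniq_lift : uniq [seq (inl t : V, inr i : V) | t <- ends4 (cr i)].
  by rewrite (map_inj_uniq lift_inj) uniq_ends.
rewrite -[4]/(size (ends4 (cr i))) -(size_map (fun t => (inl t : V, inr i : V))).
rewrite -(card_uniqP uniq_lift).
by apply/subset_leq_card/subsetP => _ /mapP[t t_end ->]; rewrite !inE /= t_end.
Qed.

Lemma card_unmarked_pairs :
  #|[predD bichromatic_pairs & crossed_pairs]| +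
  #|[pred p : V * V | P p.1 p.2 && is_false_vertex p.2]|
  <= #|unmarked_pair_darts|.
Proof.
apply: leq_trans (card_pairs_le_darts _ _).
set A := [predD _ & _]; set B := [pred p : V * V | _].
pose lift (p : T * T) : V * V := (inl p.1, inl p.2).
have lift_inj : injective lift by move=> [? ?] [? ?] [-> ->].
rewrite -(card_image lift_inj A) -cardUI (_ : #|[predI _ & B]| = 0) ?addn0; last first.
  apply: eq_card0 => -[x y]; rewrite !inE; apply/and3P => -[/imageP[p _]].
  by rewrite /lift => -[_ ->].
apply/subset_leq_card/subsetP => -[x y]; rewrite !inE.
case/orP=> [/imageP[[u v] + [-> ->]] | ].
  rewrite !inE /bichromatic_pairs /crossed_pairs /= => /andP[uncrossed bic].
  by rewrite uncrossed bic join_bichromatic.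
by case: x => [u|j]; case: y => [v|j'] //=; rewrite ?andbT ?andbF.
Qed.

Lemma card_unmarked_darts : 4 * k + 21 <= #|[predC marked]|.
Proof.
have := cardID crossed_pairs bichromatic_pairs.
have := card_bichromatic_pairs; have := card_unmarked_pairs => pairs_le bic split_bic.
set U := #|unmarked_pair_darts| in pairs_le *.
set Bic := #|bichromatic_pairs| in bic split_bic.
set I := #|[predI _ & _]| in split_bic.
set D := #|[predD _ & _]| in pairs_le split_bic.
set F := #|[pred p | _]| in pairs_le.
case: (posnP k) => [k0 | k_gt0].
  have I0 : I = 0.
    apply: eq_card0 => p; rewrite !inE; apply/andP => -[_ /existsP[j _]].
    by have := ltn_ord j; rewrite [X in _ < X]k0.
  have := card_unmarked_ge (b := false) (fun ff => False_ind _ (notF ff)).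
  rewrite -/U addn0 => unmarked_le; apply: leq_trans unmarked_le; lia.
pose i : 'I_k := Ordinal k_gt0.
have := card_bichromatic_crossed i; have := card_false_pairs i.
have := card_unmarked_ge (@unmarked_false_dart i); rewrite -/U -/I -/F.
move=> unmarked_le false_pairs crossed_le; apply: leq_trans unmarked_le.
by move: crossed_le; case: (side _ != _); case: (side _ != _); lia.
Qed.

End JoinK43.

Theorem lemma10 (T1 T2 : finType) (g : rel T1) (h : rel T2) :
  simple_graph g -> simple_graph h -> #|T1| = 4 -> #|T2| = 3 ->
  ~ class_C0 (join g h).
Proof.
move=> g_simple h_simple card_T1 card_T2 [k [cr [sigma [alpha [[cr_ok pm rotation] disj]]]]].
have k_le1 : k <= 1.
  by apply: C0_crossings_le1 cr_ok _ disj; rewrite card_sum card_T1 card_T2.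
have := plane_map_unmarked_darts pm
  (planarization_sym cr (join_sym g_simple h_simple))
  (planarization_irr cr (join_irr g_simple h_simple))
  (planarization_no_leaf card_T1 card_T2 cr_ok k_le1) (S := marked sigma alpha).
rewrite card_planarization_vertices // planarization_no_isolated //.
move=> /(_ isT (marked_meets_triangles pm)).
have := card_unmarked_darts card_T1 card_T2 cr_ok k_le1 pm rotation.
move=> /leq_add /(_ (leqnn 8)) /leq_trans /[apply].
lia.
Qed.
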